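(* Let $T$ be a directed tree with root (source) $\rho$, let $R$ be a finite set of positive integers such that there exists a burning assignment $\phi:R\to V(T)$ with $V(T)=\bigcup_{r\in R}N^+_{r-1}(\phi(r))$, and let $s$ be a sink of $T$ whose distance $d(\rho,s)$ from $\rho$ is maximal among all sinks. Then either $d(\rho,s)\le \max(R)-1$, or there exist a burning assignment $\phi:R\to V(T)$ with $V(T)=\bigcup_{r\in R}N^+_{r-1}(\phi(r))$ and some $r\in R$ such that $\phi(r)$ is the node $v$ on the path from $\rho$ to $s$ with $d(v,s)=r-1$.
   Context: A directed tree is a rooted tree with a single source (the root) whose arcs are all directed away from the root. $d(u,w)$ denotes the directed distance (number of arcs of a shortest directed path) from $u$ to $w$. $N^+_k(v)$ is the set of nodes reachable from $v$ by a directed path with at most $k$ arcs (so $N^+_0(v)=\{v\}$). For a set $R$ of positive integers (burning ranges), a burning assignment is a map $\phi:R\to V(T)$; it burns $T$ if $V(T)=\bigcup_{r\in R}N^+_{r-1}(\phi(r))$. *)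

From mathcomp Require Import all_boot.
Set Implicit Arguments. Unset Strict Implicit. Unset Printing Implicit Defensive.

Definition directed_tree (T : finType) (e : rel T) (rho : T) : Prop :=
  (forall v, ~~ e v rho) /\
  (forall v, v != rho -> exists! u, e u v) /\
  (forall v, connect e rho v).

Definition reach_within (T : finType) (e : rel T) (k : nat) (v w : T) : Prop :=
  exists p : seq T, [/\ path e v p, last v p = w & size p <= k].

Definition out_ball (T : finType) (e : rel T) (k : nat) (v : T) : T -> Prop :=
  fun w => reach_within e k v w.

Definition dist_is (T : finType) (e : rel T) (u w : T) (k : nat) : Prop :=
  reach_within e k u w /\ (forall j, j < k -> ~ reach_within e j u w).

Definition sink (T : finType) (e : rel T) (s : T) : Prop := forall w, ~~ e s w.

(* phi : R -> V(T) (given as a function nat -> T, only its values on R matter)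
   burns T:  V(T) = \bigcup_{r in R} N^+_{r-1}(phi r). *)
Definition burns (T : finType) (e : rel T) (R : seq nat) (phi : nat -> T) : Prop :=
  forall w : T, exists2 r, r \in R & out_ball e (r - 1) (phi r) w.

From mathcomp Require Import all_boot zify.

(* Let [r] be a range whose fire reaches the deepest sink [s] from [u = phi r],
   and let [v] be the ancestor of [s] with d(v, s) = r - 1; it exists unless
   d(rho, s) < r - 1 <= max R - 1.  Paths from the root are unique, so [v] lies
   on the root path of [u].  A node [w] burnt from [u] lies below [u], and some
   sink below [w] is no deeper than [s]; hence d(v, w) <= d(rho, s) - d(rho, v)
   = r - 1, and moving the fire [r] from [u] to [v] still burns the tree. *)

Section DirectedPaths.
Context {T : finType} {e : rel T}.

Lemma dist_is_uniq {u w k k'} : dist_is e u w k -> dist_is e u w k' -> k = k'.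
Proof.
move=> [reach_k min_k] [reach_k' min_k'].
by case: (ltngtP k k') => // [/min_k' | /min_k].
Qed.

Lemma reach_within_drop {x p} k m :
  path e x p -> size p <= m + k -> reach_within e m (last x (take k p)) (last x p).
Proof.
rewrite -{1 4}(cat_take_drop k p) cat_path last_cat => /andP[_ drop_path] size_p.
by exists (drop k p); split; rewrite // size_drop; lia.
Qed.

Section DirectedTree.
Context {rho : T} (tree : directed_tree e rho).

Lemma arc_target_neq_root {u v} : e u v -> v != rho.
Proof. by case: tree => no_arc_to_root _; apply: contraTneq => ->. Qed.

Lemma root_path_inj {p q} :
  path e rho p -> path e rho q -> last rho p = last rho q -> p = q.
Proof.
elim/last_ind: p q => [|p x IH] q; case/lastP: q => [|q y] //;
  rewrite !rcons_path ?last_rcons /=.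
- by move=> _ /andP[_ /arc_target_neq_root/negP y_rho] /esym/eqP.
- by move=> /andP[_ /arc_target_neq_root/negP x_rho] _ /eqP.
move=> /andP[p_path px] /andP[q_path qy] eq_xy; subst y.
have [u [_ parent_uniq]] := tree.2.1 x (arc_target_neq_root px).
by rewrite (IH q) // -(parent_uniq _ px) (parent_uniq _ qy).
Qed.

Lemma root_path_uniq p : path e rho p -> uniq (rho :: p).
Proof.
elim/last_ind: p => [|p x IH] // xp_path.
rewrite -rcons_cons rcons_uniq IH ?andbT; last first.
  by move: xp_path; rewrite rcons_path => /andP[].
apply/negP; move: xp_path => /[swap] /splitPl[p1 p2 x_last] xp_path.
have p1_path : path e rho p1 by move: xp_path; rewrite rcons_cat cat_path => /andP[].
have := root_path_inj p1_path xp_path; rewrite last_rcons x_last.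
by move=> /(_ erefl)/(congr1 size); rewrite size_rcons size_cat; lia.
Qed.

Lemma root_path_size {p} : path e rho p -> size p < #|T|.
Proof.
move=> /root_path_uniq/card_uniqP card_p.
by rewrite -[size p < _]/(size (rho :: p) <= _) -card_p max_card.
Qed.

Lemma dist_root_path {p} : path e rho p -> dist_is e rho (last rho p) (size p).
Proof.
move=> p_path; split; first by exists p.
move=> j lt_j_p [q [q_path q_last q_size]].
by rewrite -(root_path_inj p_path q_path (esym q_last)) in q_size; lia.
Qed.

Lemma dist_root_ancestor {p} k : path e rho p -> k <= size p ->
  dist_is e (last rho (take k p)) (last rho p) (size p - k).
Proof.
move=> p_path le_k_p; split; first by apply: reach_within_drop => //; lia.
move=> j lt_j [q [q_path q_last q_size]].
have pq_path : path e rho (take k p ++ q) by rewrite cat_path take_path.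
have := root_path_inj pq_path p_path; rewrite last_cat q_last => /(_ erefl).
by move=> /(congr1 size); rewrite size_cat size_takel //; lia.
Qed.

Lemma exists_sink_below w : exists2 q, path e w q & sink e (last w q).
Proof.
have [a a_path ->] := connectP (tree.2.2 w).
move: {2}(#|T| - size a) (leqnn (#|T| - size a)) => n.
elim: n a a_path => [|n IH] a a_path le_n.
  by have := root_path_size a_path; lia.
have [y ay | no_arc] := pickP (e (last rho a)); last first.
  by exists [::] => // y; rewrite no_arc.
have ay_path : path e rho (rcons a y) by rewrite rcons_path a_path ay.
have [|q q_path q_sink] := IH (rcons a y) ay_path.
  by rewrite size_rcons; lia.
by exists (y :: q); rewrite /= ?ay -(last_rcons rho a y).
Qed.

Section Height.
Variable h : nat.
Hypothesis sink_depth_le : forall s d, sink e s -> dist_is e rho s d -> d <= h.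

Lemma root_path_size_le {p} : path e rho p -> size p <= h.
Proof.
move=> p_path; have [q q_path q_sink] := exists_sink_below (last rho p).
have pq_path : path e rho (p ++ q) by rewrite cat_path p_path q_path.
have := sink_depth_le _ _ _ (dist_root_path pq_path).
by rewrite size_cat last_cat => /(_ q_sink); lia.
Qed.

Lemma reach_from_root_ancestor a k w : path e rho a -> k <= size a ->
  connect e (last rho a) w -> reach_within e (h - k) (last rho (take k a)) w.
Proof.
move=> a_path le_k_a /connectP[q q_path ->].
have aq_path : path e rho (a ++ q) by rewrite cat_path a_path q_path.
have := reach_within_drop k (h - k) aq_path.
rewrite takel_cat // last_cat; apply.
by have := root_path_size_le aq_path; rewrite size_cat; lia.
Qed.

End Height.
End DirectedTree.
End DirectedPaths.

Theorem mainTheorem9 (T : finType) (e : rel T) (rho : T) (R : seq nat)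
    (s : T) (ds : nat) :
  directed_tree e rho ->
  (forall r, r \in R -> 0 < r) ->
  (exists phi : nat -> T, burns e R phi) ->
  sink e s ->
  dist_is e rho s ds ->
  (forall s' ds', sink e s' -> dist_is e rho s' ds' -> ds' <= ds) ->
  ds <= \max_(r <- R) r - 1 \/
  exists phi : nat -> T, burns e R phi /\
    exists2 r, r \in R & dist_is e (phi r) s (r - 1).
Proof.
(* Only the maximality of d(rho, s) among sinks is used, not that [s] is a
   sink nor that the ranges are positive. *)
move=> tree _ [phi burnt] _ s_dist deepest.
have [r rR [p [p_path p_last p_size]]] := burnt s.
have [a a_path a_last] := connectP (tree.2.2 (phi r)).
have ap_path : path e rho (a ++ p) by rewrite cat_path a_path -a_last.
have ap_last : last rho (a ++ p) = s by rewrite last_cat -a_last.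
have := dist_is_uniq (dist_root_path tree ap_path); rewrite ap_last size_cat.
move=> /(_ _ s_dist) ap_size.
have [lt_ds_r | le_r_ds] := ltnP ds (r - 1).
  have : r <= \max_(i <- R) i := leq_bigmax_seq (P := xpredT) (F := id) r rR isT.
  by left; lia.
right; set k := ds - (r - 1).
have le_k_a : k <= size a by lia.
exists (fun x => if x == r then last rho (take k a) else phi x); split.
  move=> w; have [r' r'R reach_w] := burnt w.
  exists r' => //; case: eqP => [eq_r | _] //; subst r'.
  have [q [q_path <- _]] := reach_w.
  rewrite (_ : r - 1 = ds - k); last by lia.
  by apply: reach_from_root_ancestor => //; apply/connectP; exists q; rewrite -?a_last.
exists r => //; rewrite eqxx -ap_last -(takel_cat p le_k_a).
have -> : r - 1 = size (a ++ p) - k by rewrite size_cat; lia.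
by apply: dist_root_ancestor; rewrite // size_cat; lia.
Qed.
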